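(* Let $\theta_n>0$ and let $L_{n-1},L_n\ge 1$ be integers. Let $z^l$ be a real tensor and let $z^l_1,\dots,z^l_{L_{n-1}}$ be tensors of the same shape with $\sum_{i=1}^{L_{n-1}} z^l_i=z^l$. Let $X$ be the tensor obtained by stacking them, $X[i]=z^l_i$ for $i\in\{1,\dots,L_{n-1}\}$, and let $\widetilde h(X)$ be the output of the PASC integrate-and-fire procedure (described in the context) with threshold parameter $\theta_n$, input quantization step $L_{n-1}$ and output quantization step $L_n$. Then (a) $\displaystyle \widehat h(z^l):=\theta_n\,\mathrm{clip}\!\left(\frac{1}{L_n}\left\lfloor \frac{z^l L_n}{\theta_n}+\frac12\right\rfloor,0,1\right)=\sum_{j=1}^{L_n}\widetilde h(X)[j]$ (elementwise), and (b) every entry of every $\widetilde h(X)[j]$, $j\in\{1,\dots,L_n\}$, lies in the set $\{0,\theta_n/L_n\}$.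
   Context: $\widehat h$ is the Quantization-Clip-Floor-Shift (QCFS) activation with quantization step $L_n$ and (trained) threshold $\lambda^l=\theta_n$; $\mathrm{clip}(y,0,1)=\min(\max(y,0),1)$ and all operations are elementwise. $H$ denotes the Heaviside step function, $H(y)=1$ if $y\ge 0$ and $H(y)=0$ otherwise. The PASC integrate-and-fire procedure $\widetilde h$ acts independently on each entry; for a single entry, with input values $X[1],\dots,X[L_{n-1}]$, it is as follows. Set $\theta^*=\theta_n/L_n$, membrane potential $m=\theta^*/2$, spike count $s=0$. Stage 1: for $t=1,\dots,L_{n-1}$: set $m\leftarrow m+X[t]$; if $m\ge\theta^*$ then $s\leftarrow s+\theta^*$ and $m\leftarrow m-\theta^*$. Stage 2 (no input; starting from the $m$ and $s$ left by Stage 1): for $t=1,\dots,\max(L_{n-1},L_n)-1$: if $m\ge\theta^*$ then $s\leftarrow s+\theta^*$, $m\leftarrow m-\theta^*$ (excitatory spike); else if $m<0$ then $s\leftarrow s-\theta^*$, $m\leftarrow m+\theta^*$ (inhibitory spike); otherwise nothing. Stage 3: set $\mathrm{mem}(0)=s$; for $t=1,\dots,L_n$: output $\widetilde h(X)[t]=H(\mathrm{mem}(t-1)-\theta^* )\cdot\theta^*$ and set $\mathrm{mem}(t)=\mathrm{mem}(t-1)-\widetilde h(X)[t]$. The output $\widetilde h(X)$ is the stack of the $L_n$ values $\widetilde h(X)[1],\dots,\widetilde h(X)[L_n]$. *)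

From HB Require Import structures.
From mathcomp Require Import all_boot all_order all_algebra.
From mathcomp Require Import reals.
Import Order.TTheory GRing.Theory Num.Theory.
Local Open Scope ring_scope.

Section Defs.
Variable R : realType.

Definition clip01 (y : R) : R := Num.min (Num.max y 0) 1.

Definition qcfs (theta : R) (L : nat) (y : R) : R :=
  theta * clip01 ((Num.floor (y * L%:R / theta + 2^-1))%:~R / L%:R).

(* state = (membrane potential m, spike count s) *)
Definition pasc_stage1 (thr : R) (ms : R * R) (x : R) : R * R :=
  let m := ms.1 + x in
  if thr <= m then (m - thr, ms.2 + thr) else (m, ms.2).

Definition pasc_stage2 (thr : R) (ms : R * R) : R * R :=
  if thr <= ms.1 then (ms.1 - thr, ms.2 + thr)
  else if ms.1 < 0 then (ms.1 + thr, ms.2 - thr)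
  else ms.

Definition pasc_mem (thr s : R) (t : nat) : R :=
  iter t (fun m => m - (if thr <= m then thr else 0)) s.

(* PASC on a single entry, input values x[1..Lp] (here x : 'I_Lp -> R,
   x (t-1) = X[t]); returns the output at time step j+1 (0-based j),
   i.e. H(mem(j) - thr) * thr with H(y) = 1 iff y >= 0. *)
Definition pasc_entry (theta : R) (Lp Ln : nat) (x : 'I_Lp -> R) (j : nat) : R :=
  let thr := theta / Ln%:R in
  let st1 := foldl (pasc_stage1 thr) (thr / 2, 0) [seq x t | t <- enum 'I_Lp] in
  let st2 := iter (maxn Lp Ln).-1 (pasc_stage2 thr) st1 in
  if thr <= pasc_mem thr st2.2 j then thr else 0.

(* PASC on tensors (functions I -> R), applied entrywise.
   X t = X[t+1] ; output (pasc theta Ln X j) = htilde(X)[j+1]. *)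
Definition pasc (I : Type) (theta : R) (Lp Ln : nat) (X : 'I_Lp -> I -> R)
  (j : 'I_Ln) : I -> R :=
  fun i => pasc_entry theta Lp Ln (fun t => X t i) j.
End Defs.
Arguments pasc_entry {R} theta Lp Ln x j.
Arguments pasc {R I} theta Lp Ln X j.
Arguments qcfs {R} theta L y.

(* Measure everything in units of the spike threshold thr = theta / Ln.  After
   Stage 1 the spike count is k * thr with 0 <= k <= Lp, and the QCFS argument
   y = z Ln / theta + 1/2 equals k + m / thr, m the membrane potential;
   moreover m >= 0 if all Lp steps spiked and m < thr if none did.  Each
   Stage 2 step moves m one unit towards [0, thr) and transfers that unit to
   the count, so after N = max(Lp, Ln) - 1 steps the count is
   k + clamp (-N) N (floor (m / thr)), while floor y = k + floor (m / thr).
   Stage 3 fires exactly clamp 0 Ln count times and QCFS equals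
   thr * clamp 0 Ln (floor y); the two agree because whenever Stage 2 is cut
   short, the count is already <= 0 or >= Ln. *)
From HB Require Import structures.
From mathcomp Require Import all_boot all_order all_algebra.
From mathcomp Require Import reals.
From mathcomp Require Import zify ring lra.
Import Order.TTheory GRing.Theory Num.Theory.
Local Open Scope ring_scope.

Definition clamp (lo hi k : int) : int := Num.min (Num.max k lo) hi.

Lemma clamp_stage2_output (Lp Ln N : nat) (k q : int) :
  (Lp <= N.+1)%N -> (Ln <= N.+1)%N -> 0 <= k <= Lp ->
  (k = Lp -> 0 <= q) -> (k = 0 -> q <= 0) ->
  clamp 0 Ln (k + q) = clamp 0 Ln (k + clamp (- N%:Z) N q).
Proof. by rewrite /clamp; lia. Qed.

Lemma intr_min (R : numDomainType) (a b : int) :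
  (Num.min a b)%:~R = Num.min a%:~R b%:~R :> R.
Proof. by rewrite !minElt ltr_int -fun_if. Qed.

Lemma intr_max (R : numDomainType) (a b : int) :
  (Num.max a b)%:~R = Num.max a%:~R b%:~R :> R.
Proof. by rewrite !maxElt ltr_int -fun_if. Qed.

Lemma clip01_intr_div (R : realType) (F : int) (L : nat) : (0 < L)%N ->
  clip01 R (F%:~R / L%:R) = (clamp 0 L F)%:~R / L%:R.
Proof.
move=> L_gt0; have L0 : (0 : R) <= L%:R^-1 by rewrite invr_ge0 ler0n.
rewrite /clip01 /clamp intr_min intr_max minr_pMl // maxr_pMl //.
by rewrite mul0r divff // pnatr_eq0 -lt0n.
Qed.

Section PascEntry.
Context {R : realType} {thr : R}.
Hypothesis thr_gt0 : 0 < thr.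

Lemma intr_mul_thrD1 (a : int) : (a + 1)%:~R * thr = a%:~R * thr + thr.
Proof. by rewrite intrD mulrDl mul1r. Qed.

Lemma intr_mul_thrB1 (a : int) : (a - 1)%:~R * thr = a%:~R * thr - thr.
Proof. by rewrite intrB mulrBl mul1r. Qed.

Lemma ler_intr_mul_thr (a : int) (x : R) :
  (a%:~R * thr <= x) = (a <= Num.floor (x / thr)).
Proof. by rewrite floor_ge_int ler_pdivlMr. Qed.

Lemma ltr_intr_mul_thr (a : int) (x : R) :
  (x < a%:~R * thr) = (Num.floor (x / thr) < a).
Proof. by rewrite floor_lt_int ltr_pdivrMr. Qed.

Lemma ler_thr_intr_mul (a : int) : (thr <= a%:~R * thr) = (1 <= a).
Proof. by rewrite -[X in X <= _]mul1r ler_pM2r // -(ler_int R). Qed.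

Lemma pasc_mem_intr (k : int) (j : nat) :
  pasc_mem R thr (k%:~R * thr) j = (k - clamp 0 j k)%:~R * thr.
Proof.
elim: j => [|j IH]; first by rewrite /clamp /= (_ : _ - _ = k) //; lia.
rewrite /pasc_mem iterS -/(pasc_mem R thr _ j) IH.
rewrite ler_thr_intr_mul; case: ifPn => fires;
  rewrite ?subr0 -?intr_mul_thrB1; congr (_%:~R * _); rewrite /clamp in fires *; lia.
Qed.

Lemma pasc_mem_fires (k : int) (j : nat) :
  (thr <= pasc_mem R thr (k%:~R * thr) j) = (j%:Z < k).
Proof. by rewrite pasc_mem_intr ler_thr_intr_mul /clamp; lia. Qed.

Lemma sum_pasc_outputs (k : int) (n : nat) :
  \sum_(j < n) (if thr <= pasc_mem R thr (k%:~R * thr) j then thr else 0) =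
  (clamp 0 n k)%:~R * thr.
Proof.
elim: n => [|n IH]; first by rewrite big_ord0 (_ : clamp 0 0 k = 0) ?mul0r // /clamp; lia.
rewrite big_ord_recr /= IH pasc_mem_fires; case: ifPn => fires;
  rewrite ?addr0 -?intr_mul_thrD1; congr (_%:~R * _); rewrite /clamp; lia.
Qed.

Lemma foldl_pasc_stage1 (xs : seq R) : exists k : int,
  let st := foldl (pasc_stage1 R thr) (thr / 2, 0) xs in
  [/\ st.2 = k%:~R * thr, st.1 + st.2 = thr / 2 + \sum_(x <- xs) x,
      0 <= k <= (size xs)%:Z, (k = (size xs)%:Z -> 0 <= st.1) &
      (k = 0 -> st.1 < thr)].
Proof.
elim/last_ind: xs => [|xs x [k]].
  by exists 0; rewrite /= big_nil mul0r; split=> // _; move: thr_gt0; lra.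
rewrite /= foldl_rcons size_rcons big_rcons.
case: (foldl _ _ xs) => m s /= [s_k sum_ms k_range _ _].
rewrite /pasc_stage1 /=; case: ifP => fires.
  exists (k + 1); split=> /=; rewrite ?intr_mul_thrD1; try lra; lia.
exists k; split=> //=; try lra; lia.
Qed.

Lemma iter_pasc_stage2 (n : nat) (m s : R) :
  let c := clamp (- n%:Z) n (Num.floor (m / thr)) in
  iter n (pasc_stage2 R thr) (m, s) = (m - c%:~R * thr, s + c%:~R * thr).
Proof.
elim: n => [|n IH] /=.
  by rewrite (_ : clamp _ _ _ = 0) ?mul0r ?subr0 ?addr0 // /clamp; lia.
rewrite IH /pasc_stage2 /=.
set q := Num.floor (m / thr); set c := clamp (- n%:Z) n q.
have -> : (thr <= m - c%:~R * thr) = (c + 1 <= q).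
  by rewrite -ler_intr_mul_thr intr_mul_thrD1 lerBrDr addrC.
have -> : (m - c%:~R * thr < 0) = (q < c).
  by rewrite subr_lt0 ltr_intr_mul_thr.
case: ifPn => up; last case: ifPn => down.
- have -> : clamp (- n.+1%:Z) n.+1 q = c + 1 by move: up; rewrite /c /clamp; lia.
  by rewrite intr_mul_thrD1; congr pair; ring.
- have -> : clamp (- n.+1%:Z) n.+1 q = c - 1 by move: down; rewrite /c /clamp; lia.
  by rewrite intr_mul_thrB1; congr pair; ring.
- by rewrite (_ : clamp _ _ q = c) //; move: up down; rewrite /c /clamp; lia.
Qed.

End PascEntry.

Lemma qcfs_sum_pasc_entry (R : realType) (theta : R) (Lp Ln : nat)
    (x : 'I_Lp -> R) :
  0 < theta -> (0 < Ln)%N ->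
  qcfs theta Ln (\sum_(t < Lp) x t) = \sum_(j < Ln) pasc_entry theta Lp Ln x j.
Proof.
move=> theta_gt0 Ln_gt0; set thr := theta / Ln%:R.
have Ln_neq0 : Ln%:R != 0 :> R by rewrite pnatr_eq0 -lt0n.
have thr_gt0 : 0 < thr by rewrite divr_gt0 // ltr0n.
have [k [s_k sum_ms k_range k_full k_empty]] :=
  foldl_pasc_stage1 thr_gt0 [seq x t | t <- enum 'I_Lp].
have sum_enum : \sum_(y <- [seq x t | t <- enum 'I_Lp]) y = \sum_(t < Lp) x t.
  by rewrite big_map big_enum.
rewrite sum_enum in sum_ms; rewrite size_map size_enum_ord in k_range k_full.
rewrite /pasc_entry -/thr.
case: (foldl _ _ _) s_k sum_ms k_full k_empty => m s /= -> sum_ms k_full k_empty.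
rewrite iter_pasc_stage2 //= -mulrDl -intrD sum_pasc_outputs //.
rewrite /qcfs clip01_intr_div // mulrCA -/thr; congr (_%:~R * _).
have -> : (\sum_(t < Lp) x t) * Ln%:R / theta + 2^-1 = m / thr + k%:~R.
  have -> : \sum_(t < Lp) x t = m + k%:~R * thr - thr / 2 by lra.
  by rewrite /thr; field; rewrite Ln_neq0 gt_eqF.
rewrite floorDrz ?intr_int // intrKfloor addrC.
apply: (@clamp_stage2_output Lp) => //; [lia | lia | |].
- by move/k_full => m_ge0; rewrite floor_ge0 divr_ge0 // ltW.
- by move/k_empty; rewrite floor_le0 ltr_pdivrMr // mul1r.
Qed.

Theorem theorem2 (R : realType) (I : Type) (theta : R) (Lp Ln : nat)
    (z : I -> R) (X : 'I_Lp -> I -> R) :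
  0 < theta -> (0 < Lp)%N -> (0 < Ln)%N ->
  (forall i : I, \sum_(t < Lp) X t i = z i) ->
  (forall i : I, qcfs theta Ln (z i) = \sum_(j < Ln) pasc theta Lp Ln X j i) /\
  (forall (j : 'I_Ln) (i : I),
      pasc theta Lp Ln X j i = 0 \/ pasc theta Lp Ln X j i = theta / Ln%:R).
Proof.
move=> theta_gt0 _ Ln_gt0 sum_X; split=> [i | j i].
  by rewrite -sum_X qcfs_sum_pasc_entry.
by rewrite /pasc /pasc_entry; case: ifP => _; [right | left].
Qed.
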